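(* Let $p$ be a prime and $f\in\mathbb{Z}_p[x]$ with $\deg f\ge 2$. If $E\subset\mathbb{Z}_p$ is a clopen $f$-invariant set such that $f:E\to E$ is minimal, then $f:E\to E$ is topologically conjugate to the adding machine $\tau:x\mapsto x+1$ on the odometer $\mathbb{Z}_{(p_s)}$, where $$(p_s)_{s\ge1}=(k,\,kd,\,kdp,\,kdp^2,\,\dots)$$ for some integers $k,d$ with $1\le k\le p$ and $d\mid (p-1)$.
   Context: For a sequence of positive integers $(p_s)_{s\ge1}$ with $p_s\mid p_{s+1}$, the odometer $\mathbb{Z}_{(p_s)}$ is the inverse limit $\varprojlim \mathbb{Z}/p_s\mathbb{Z}$ (a profinite group), and the adding machine is the map $\tau(x)=x+1$ on it. $f:E\to E$ is minimal if every orbit is dense in $E$; topological conjugacy means there is a homeomorphism $h:E\to\mathbb{Z}_{(p_s)}$ with $h\circ f=\tau\circ h$. *)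

From mathcomp Require Import all_boot.
Set Implicit Arguments. Unset Strict Implicit. Unset Printing Implicit Defensive.

(* A point of an inverse limit  lim Z/P_s Z  is a compatible sequence of
   residues y s in [0, P s) with  y (s+1) mod P s = y s. *)
Definition invlim (P : nat -> nat) (y : nat -> nat) : Prop :=
  forall s, y s < P s /\ y s.+1 %% P s = y s.

Definition Zp (p : nat) := invlim (fun n => p ^ n).

(* The odometer Z_(P) (assuming P s %| P s.+1) and the adding machine. *)
Definition odometer (P : nat -> nat) := invlim P.
Definition adding_machine (P : nat -> nat) (y : nat -> nat) : nat -> nat :=
  fun s => (y s + 1) %% P s.

(* Polynomials over Z_p: coefficient lists (constant term first) with
   coefficients in Z_p; evaluation computed levelwise (reduction mod p^n
   is a ring morphism Z_p -> Z/p^n). *)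
Definition Zp_poly (p : nat) (c : seq (nat -> nat)) : Prop :=
  forall i, i < size c -> Zp p (nth (fun _ => 0) c i).

Definition peval (p : nat) (c : seq (nat -> nat)) (x : nat -> nat) : nat -> nat :=
  fun n => (\sum_(i < size c) (nth (fun _ => 0) c i) n * (x n) ^ i) %% p ^ n.

Definition deg_ge2 (c : seq (nat -> nat)) : Prop :=
  2 < size c /\ exists n, (last (fun _ => 0) c) n != 0.

(* Topology: the cylinder sets {z | z s = y s} form a basis. *)
Definition open_in (P : nat -> nat) (U : (nat -> nat) -> Prop) : Prop :=
  forall x, U x -> exists n, forall z, invlim P z -> z n = x n -> U z.

Definition clopen_in (P : nat -> nat) (E : (nat -> nat) -> Prop) : Prop :=
  (forall x, E x -> invlim P x) /\
  open_in P E /\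
  open_in P (fun x => invlim P x /\ ~ E x).

Definition continuous_on (P Q : nat -> nat) (A : (nat -> nat) -> Prop)
  (h : (nat -> nat) -> (nat -> nat)) : Prop :=
  forall x, A x -> forall s, exists n, forall z, A z -> z n = x n -> h z s = h x s.

(* f : E -> E is minimal: every orbit is dense in E *)
Definition minimal_on (p : nat) (E : (nat -> nat) -> Prop)
  (f : (nat -> nat) -> (nat -> nat)) : Prop :=
  forall x y, E x -> E y -> forall n, exists m, iter m f x n = y n.

(* topological conjugacy of f : E -> E (E subset of Z_p) with the adding
   machine on the odometer Z_(P); points are compared extensionally. *)
Definition conj_to_odometer (p : nat) (E : (nat -> nat) -> Prop)
  (f : (nat -> nat) -> (nat -> nat)) (P : nat -> nat) : Prop :=
  exists (h g : (nat -> nat) -> (nat -> nat)),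
    (forall x, E x -> odometer P (h x)) /\
    (forall y, odometer P y -> E (g y)) /\
    (forall x, E x -> g (h x) =1 x) /\
    (forall y, odometer P y -> h (g y) =1 y) /\
    continuous_on (fun n => p ^ n) P E h /\
    continuous_on P (fun n => p ^ n) (odometer P) g /\
    (forall x, E x -> h (f x) =1 adding_machine P (h x)).

(* (p_s)_{s>=1} = (k, kd, kdp, kdp^2, ...), here indexed from 0. *)
Definition odo_seq (p k d : nat) (s : nat) : nat :=
  if s is s'.+1 then k * d * p ^ s' else k.

From mathcomp Require Import all_boot zify ring.
From mathcomp Require cyclic.
From Stdlib Require Import Classical.
Set Implicit Arguments. Unset Strict Implicit. Unset Printing Implicit Defensive.

(* Fix x0 in E and let L n be the period of x0 modulo p^n.  By minimality every
   residue of E modulo p^n lies on the cycle of x0, so the position on that cycle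
   identifies E with the odometer of (L n), and f with +1; any sequence cofinal
   with (L n) for divisibility gives the same odometer.  Taylor's formula shows
   that f^(L n) acts on the p lifts of x0 mod p^(n+1) as an affine map
   t |-> A t + b of Z/p, where A = (f^(L n))'(x0) mod p; hence L (n+1) / L n is
   1, p, or the order of A in (Z/p)^*, and the last case occurs at most once
   since A = 1 afterwards.  As E is open, all lifts of x0 lie in E for large n,
   which forces the ratio p.  So L n = k d p^(e + n - N) for n >= N, with
   k = L 1 <= p and d | p - 1. *)

Lemma dvdn_seq_le (P : nat -> nat) s t :
  (forall s, P s %| P s.+1) -> s <= t -> P s %| P t.
Proof.
move=> P_dvd /subnK <-; elim: (t - s) => [|i IH] //.
by rewrite addSn (dvdn_trans IH).
Qed.

Lemma invlim_lt P y s : invlim P y -> y s < P s.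
Proof. by move=> /(_ s) []. Qed.

Lemma invlim_mod P y s t :
  (forall s, P s %| P s.+1) -> invlim P y -> s <= t -> y t %% P s = y s.
Proof.
move=> P_dvd y_lim /subnK <-; elim: (t - s) => [|i IH].
  by rewrite add0n modn_small // invlim_lt.
by rewrite addSn -(modn_dvdm _ (dvdn_seq_le P_dvd (leq_addl i s))) (proj2 (y_lim _)).
Qed.

Lemma Zp_lt p x n : Zp p x -> x n < p ^ n.
Proof. exact: invlim_lt. Qed.

Lemma Zp_mod p x n m : Zp p x -> n <= m -> x m %% p ^ n = x n.
Proof. by apply: invlim_mod => s; rewrite expnS dvdn_mull. Qed.

Lemma Zp_eq_le p z w n m : Zp p z -> Zp p w -> n <= m -> z m = w m -> z n = w n.
Proof. by move=> z_Zp w_Zp nm e; rewrite -(Zp_mod z_Zp nm) -(Zp_mod w_Zp nm) e. Qed.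

Lemma Zp_digit p z w n : 0 < p -> Zp p z -> Zp p w -> z n = w n ->
  exists t, z n.+1 = w n.+1 + p ^ n * t %[mod p ^ n.+1].
Proof.
move=> p_gt0 z_Zp w_Zp e.
have zw : z n.+1 = w n.+1 %[mod p ^ n].
  by rewrite (Zp_mod z_Zp (leqnSn n)) (Zp_mod w_Zp (leqnSn n)).
have := Zp_lt n.+1 z_Zp; have := Zp_lt n.+1 w_Zp; rewrite expnSr => wl zl.
have pn_gt0 : 0 < p ^ n by rewrite expn_gt0 p_gt0.
case: (leqP (w n.+1) (z n.+1)) => [wz|zw_lt].
  move/eqP: zw; rewrite eqn_mod_dvd // => /dvdnP [t Ht].
  by exists t; congr (_ %% _); lia.
move/esym/eqP: zw; rewrite eqn_mod_dvd; last exact: ltnW.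
move=> /dvdnP [s Hs].
have sp : s < p by rewrite -(ltn_pmul2r pn_gt0) -Hs mulnC; lia.
exists (p - s); rewrite -(modnDr (z n.+1)) (mulnC (p ^ n) p).
congr (_ %% _); rewrite mulnBr.
have : s * p ^ n <= p ^ n * p by rewrite mulnC leq_mul2l ltnW ?orbT.
lia.
Qed.

Lemma eqmod_dvd d m a b : d %| m -> a = b %[mod m] -> a = b %[mod d].
Proof. by move=> dm ab; rewrite -(modn_dvdm a dm) ab modn_dvdm. Qed.

Lemma iter_stable T (f : T -> T) (A : T -> Prop) x j :
  (forall x, A x -> A (f x)) -> A x -> A (iter j f x).
Proof. by move=> f_A Ax; elim: j => //= j /f_A. Qed.

Lemma Zp_lift p x n t : 0 < p -> Zp p x ->
  exists z, [/\ Zp p z, z n = x n & z n.+1 = (x n.+1 + p ^ n * t) %% p ^ n.+1].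
Proof.
move=> p_gt0 x_Zp.
exists (fun m => (x m + (if n < m then p ^ n * t else 0)) %% p ^ m).
split; last by rewrite ltnSn.
- move=> m; split; first by rewrite ltn_pmod // expn_gt0 p_gt0.
  rewrite modn_dvdm ?dvdn_exp2l //.
  case: (ltngtP n m) => h.
  + rewrite (_ : n < m.+1) 1?ltnW // -modnDml.
    by rewrite (Zp_mod x_Zp (leqnSn m)).
  + rewrite (_ : n < m.+1 = false); last by lia.
    by rewrite !addn0 (Zp_mod x_Zp (leqnSn m)) modn_small // Zp_lt.
  + subst m; rewrite ltnSn addn0 addnC mulnC modnMDl (Zp_mod x_Zp (leqnSn n)).
    by rewrite modn_small // Zp_lt.
- by rewrite /= ltnn addn0 modn_small // Zp_lt.
Qed.

Definition levelwise (F : (nat -> nat) -> nat -> nat) :=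
  forall z w n, z n = w n -> F z n = F w n.

Lemma peval_levelwise p c : levelwise (peval p c).
Proof. by move=> z w n e; rewrite /peval e. Qed.

Section Levelwise.
Variable F : (nat -> nat) -> nat -> nat.
Hypothesis F_lw : levelwise F.

Lemma iter_levelwise j z w n : z n = w n -> iter j F z n = iter j F w n.
Proof. by move=> e; elim: j => //= j IH; apply: F_lw. Qed.

Lemma iter_mul_period x n L q : iter L F x n = x n -> iter (q * L) F x n = x n.
Proof.
move=> xL; elim: q => [|q IH] //=.
by rewrite mulSn iterD (iter_levelwise _ IH).
Qed.

Lemma iter_modn x n L j : iter L F x n = x n -> iter j F x n = iter (j %% L) F x n.
Proof.
move=> xL; rewrite {1}(divn_eq j L) addnC iterD.
exact/iter_levelwise/iter_mul_period.
Qed.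

End Levelwise.

Section PeriodicOrbit.
Variables (F : (nat -> nat) -> nat -> nat) (x0 : nat -> nat).
Hypothesis F_lw : levelwise F.
Hypothesis x0_rec : forall n, exists m, iter m.+1 F x0 n = x0 n.

Lemma x0_returns n : exists m, (0 < m) && (iter m F x0 n == x0 n).
Proof. by have [m e] := x0_rec n; exists m.+1; rewrite e eqxx. Qed.

Definition period n := ex_minn (x0_returns n).

Lemma period_gt0 n : 0 < period n.
Proof. by rewrite /period; case: ex_minnP => m /andP[]. Qed.

Lemma iter_period n : iter (period n) F x0 n = x0 n.
Proof. by rewrite /period; case: ex_minnP => m /andP[_ /eqP]. Qed.

Lemma period_min n m : 0 < m -> iter m F x0 n = x0 n -> period n <= m.
Proof.
move=> m_gt0 e; rewrite /period; case: ex_minnP => l _; apply.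
by rewrite m_gt0 e eqxx.
Qed.

Lemma iter_modn_period n j : iter j F x0 n = iter (j %% period n) F x0 n.
Proof. exact/iter_modn/iter_period. Qed.

Lemma eq_iter_period n a b :
  (iter a F x0 n == iter b F x0 n) = (a == b %[mod period n]).
Proof.
apply/eqP/eqP => [|ab]; last by rewrite iter_modn_period ab -iter_modn_period.
rewrite iter_modn_period [in RHS]iter_modn_period.
have := ltn_pmod a (period_gt0 n); have := ltn_pmod b (period_gt0 n).
move: (a %% _) (b %% _) => {}a {}b.
wlog ab : a b / a <= b => [hw b_lt a_lt e|b_lt _ e].
  by case: (leqP a b) => [|/ltnW] ?; [apply: hw | apply/esym/hw].
case: ltngtP ab => // ab _.
have := @period_min n (period n - b + a); rewrite addn_gt0 subn_gt0 b_lt.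
rewrite iterD (iter_levelwise F_lw _ e) -iterD subnK ?iter_period; last exact: ltnW.
by move/(_ isT erefl); lia.
Qed.

Lemma period_dvdn n j : (period n %| j) = (iter j F x0 n == x0 n).
Proof. by rewrite -[x0 in RHS]/(iter 0 F x0) eq_iter_period mod0n. Qed.

Lemma iter_addn_period n i : iter (i + period n) F x0 n = iter i F x0 n.
Proof. by apply/eqP; rewrite eq_iter_period modnDr. Qed.

Definition orbit_index n (y : nat -> nat) :=
  find (fun j => iter j F x0 n == y n) (iota 0 (period n)).

Lemma orbit_indexP n y j :
  iter j F x0 n = y n -> iter (orbit_index n y) F x0 n = y n.
Proof.
move=> e; have hit : has (fun j => iter j F x0 n == y n) (iota 0 (period n)).
  apply/hasP; exists (j %% period n); first by rewrite mem_iota ltn_pmod ?period_gt0.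
  by rewrite -iter_modn_period e.
have lt : orbit_index n y < period n.
  by rewrite /orbit_index -[X in _ < X](size_iota 0) -has_find.
by move: (nth_find 0 hit); rewrite nth_iota // add0n => /eqP.
Qed.

Lemma orbit_index_mod n y j :
  iter j F x0 n = y n -> j = orbit_index n y %[mod period n].
Proof. by move=> e; apply/eqP; rewrite -eq_iter_period e (orbit_indexP e). Qed.

Variable p : nat.
Hypothesis orbit_Zp : forall j, Zp p (iter j F x0).

Lemma period_dvd_le n m : n <= m -> period n %| period m.
Proof.
apply: dvdn_seq_le => {}n; rewrite period_dvdn; apply/eqP.
exact: Zp_eq_le (orbit_Zp _) (orbit_Zp 0) (leqnSn n) (iter_period _).
Qed.

End PeriodicOrbit.

Lemma modnD_dvdr a b m : m %| b -> (a + b) %% m = a %% m.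
Proof. by move=> /eqP mb; rewrite -modnDmr mb addn0. Qed.

Lemma expnD_sqr w q i : exists r, (w + q) ^ i = w ^ i + i * w ^ i.-1 * q + q ^ 2 * r.
Proof.
elim: i => [|i [r IH]]; first by exists 0; rewrite !muln0 mul0n !addn0.
exists (i * w ^ i.-1 + r * (w + q)).
have wi : i * w ^ i.-1 * w = i * w ^ i by case: i {IH} => //= i; rewrite expnS mulnAC mulnA.
rewrite expnSr IH /= mulSn -wi [w ^ i.+1]expnSr; ring.
Qed.

Lemma modn_monomial i a b k m : i * a * b ^ k = i * (a %% m) * (b %% m) ^ k %[mod m].
Proof.
rewrite -modnMm -[RHS]modnMm modnXm modnMmr modnMml modnMm -[RHS]modnMml.
by rewrite modnMmr modnMml.
Qed.

(* Congruent to f'(x) modulo p whenever x 1 = v. *)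
Definition pderiv1 (c : seq (nat -> nat)) (v : nat) :=
  \sum_(i < size c) i * nth (fun _ => 0) c i 1 * v ^ i.-1.

Section Taylor.
Variables (p : nat) (c : seq (nat -> nat)).
Hypothesis c_Zp : Zp_poly p c.
Local Notation f := (peval p c).
Local Notation C i := (nth (fun _ => 0) c i).

Lemma peval_taylor n w z t : 0 < n -> Zp p w ->
  z n.+1 = w n.+1 + p ^ n * t %[mod p ^ n.+1] ->
  f z n.+1 = f w n.+1 + p ^ n * (t * pderiv1 c (w 1)) %[mod p ^ n.+1].
Proof.
move=> n_gt0 w_Zp zw.
rewrite /peval modn_mod -modnDml modn_mod modnDml.
have sq : p ^ n.+1 %| (p ^ n * t) ^ 2.
  by rewrite expnMn -expnM dvdn_mulr // dvdn_exp2l //; lia.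
transitivity ((\sum_(i < size c) (C i n.+1 * w n.+1 ^ i
    + (i * C i n.+1 * w n.+1 ^ i.-1) * (p ^ n * t))) %% p ^ n.+1).
  rewrite -modn_summ -[RHS]modn_summ; congr (_ %% _); apply: eq_bigr => i _.
  rewrite -modnMmr -modnXm zw modnXm modnMmr.
  have [r ->] := expnD_sqr (w n.+1) (p ^ n * t) i.
  rewrite mulnDr modnD_dvdr; first by congr (_ %% _); ring.
  exact/dvdn_mull/dvdn_mulr.
rewrite big_split /= -big_distrl /= -modnDm -[RHS]modnDm; congr ((_ + _) %% _).
have -> : (\sum_(i < size c) i * C i n.+1 * w n.+1 ^ i.-1) * (p ^ n * t)
  = p ^ n * (t * \sum_(i < size c) i * C i n.+1 * w n.+1 ^ i.-1) by ring.
rewrite expnSr -!muln_modr; congr (_ * _).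
rewrite -modnMmr -[RHS]modnMmr; congr ((_ * _) %% _).
rewrite /pderiv1 -modn_summ -[RHS]modn_summ; congr (_ %% _); apply: eq_bigr => i _.
have C1 : C i n.+1 %% p = C i 1 by rewrite -[p]expn1 (Zp_mod (c_Zp (ltn_ord i))).
have w1 : w n.+1 %% p = w 1 by rewrite -[p]expn1 Zp_mod.
by rewrite modn_monomial C1 w1.
Qed.

Lemma iter_peval_taylor n w z t j : 0 < n -> (forall i, Zp p (iter i f w)) ->
  z n.+1 = w n.+1 + p ^ n * t %[mod p ^ n.+1] ->
  iter j f z n.+1 = iter j f w n.+1
    + p ^ n * (t * \prod_(0 <= i < j) pderiv1 c (iter i f w 1)) %[mod p ^ n.+1].
Proof.
move=> n_gt0 orbit_Zp zw; elim: j => [|j IH]; first by rewrite big_nil muln1.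
rewrite !iterS big_nat_recr //= !mulnA.
by have := peval_taylor n_gt0 (orbit_Zp j) IH; rewrite !mulnA.
Qed.

End Taylor.

Lemma geo_sum_mod1 a p j : a = 1 %[mod p] -> \sum_(0 <= i < j) a ^ i = j %[mod p].
Proof.
move=> a1; rewrite -modn_summ (eq_bigr (fun _ => 1 %% p)) => [|i _].
  by rewrite modn_summ sum_nat_const_nat muln1 subn0.
by rewrite -modnXm a1 modnXm exp1n.
Qed.

Lemma geo_sum_mod0 a p j : p %| a -> \sum_(0 <= i < j.+1) a ^ i = 1 %[mod p].
Proof.
move=> pa; rewrite big_nat_recl // expn0 -modnDmr -modn_summ.
rewrite (eq_bigr (fun _ => 0)) => [|i _]; last by apply/eqP; rewrite -/(p %| _) expnS dvdn_mulr.
by rewrite big1_eq mod0n addn0.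
Qed.

Lemma dvdn_geo_sum a p j : prime p -> 0 < a -> a != 1 %[mod p] ->
  (p %| \sum_(0 <= i < j) a ^ i) = (a ^ j == 1 %[mod p]).
Proof.
move=> p_prime a_gt0 a1.
rewrite eqn_mod_dvd ?expn_gt0 ?a_gt0 // subn1 predn_exp Euclid_dvdM //.
by rewrite -subn1 -eqn_mod_dvd // (negbTE a1) big_mkord.
Qed.

Lemma order_dvdn_pred a p q : prime p -> ~~ (p %| a) -> 0 < q -> a ^ q = 1 %[mod p] ->
  (forall j, 0 < j < q -> a ^ j != 1 %[mod p]) -> q %| p.-1.
Proof.
move=> p_prime pa q_gt0 aq q_min.
have fermat : a ^ p.-1 = 1 %[mod p].
  rewrite -(totient_prime p_prime) cyclic.Euler_exp_totient //.
  by rewrite coprime_sym prime_coprime.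
have r_one : a ^ (p.-1 %% q) = 1 %[mod p].
  have aqk : (a ^ q) ^ (p.-1 %/ q) = 1 %[mod p] by rewrite -modnXm aq modnXm exp1n.
  rewrite -fermat {2}(divn_eq p.-1 q) expnD (mulnC _ q) expnM -modnMml aqk.
  by rewrite modnMml mul1n.
case: (posnP (p.-1 %% q)) => [/eqP//|r_gt0].
by have := q_min _ (introT andP (conj r_gt0 (ltn_pmod _ q_gt0))); rewrite r_one eqxx.
Qed.

(* b * \sum_(i < j) a ^ i is the j-th iterate of 0 under t |-> a t + b on Z/p. *)
Lemma affine_return_time p a b q : prime p -> 0 < q ->
  p %| b * \sum_(0 <= i < q) a ^ i ->
  (forall j, 0 < j < q -> ~~ (p %| b * \sum_(0 <= i < j) a ^ i)) ->
  [\/ q = 1, q = p | [/\ q %| p.-1, a ^ q = 1 %[mod p] & a != 1 %[mod p]]].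
Proof.
move=> p_prime q_gt0 q_ret q_min.
have [pb|pNb] := boolP (p %| b).
  apply: Or31; case: (ltngtP q 1) => // [|q_gt1]; first lia.
  by have := q_min 1; rewrite q_gt1 big_nat1 muln1 pb => /(_ isT).
have geo j : (p %| b * \sum_(0 <= i < j) a ^ i) = (p %| \sum_(0 <= i < j) a ^ i).
  by rewrite Euclid_dvdM // (negbTE pNb).
rewrite geo in q_ret; have {}q_min j : 0 < j < q -> ~~ (p %| \sum_(0 <= i < j) a ^ i).
  by rewrite -geo; exact: q_min.
have [a1|aN1] := boolP (a == 1 %[mod p]).
  have geo1 j : (p %| \sum_(0 <= i < j) a ^ i) = (p %| j).
    by rewrite /dvdn (geo_sum_mod1 _ (eqP a1)).
  apply: Or32; rewrite geo1 in q_ret.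
  case: (ltngtP p q) (dvdn_leq q_gt0 q_ret) => // p_lt _.
  by have := q_min p; rewrite geo1 dvdnn prime_gt0 // p_lt => /(_ isT).
have [pa|pNa] := boolP (p %| a).
  move: q_ret; case: q q_gt0 {q_min} => // q _.
  by rewrite /dvdn (geo_sum_mod0 _ pa) modn_small ?prime_gt1.
have a_gt0 : 0 < a by rewrite lt0n; apply: contraNneq pNa => ->.
rewrite dvdn_geo_sum // in q_ret.
apply: Or33; split => //; last exact/eqP.
apply: order_dvdn_pred pNa q_gt0 (eqP q_ret) _ => // j /q_min.
by rewrite dvdn_geo_sum.
Qed.

Lemma prodn_periodic K M (G : nat -> nat) : (forall i, G (i + K) = G i) ->
  \prod_(0 <= i < K * M) G i = (\prod_(0 <= i < K) G i) ^ M.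
Proof.
move=> G_per; elim: M => [|M IH]; first by rewrite muln0 big_geq.
have G_perM j i : G (i + K * j) = G i.
  by elim: j i => [|j IHj] i; rewrite ?muln0 ?addn0 // mulnS addnA IHj G_per.
rewrite mulnS addnC (@big_cat_nat _ _ _ (K * M)) ?leq_addr //= IH expnS mulnC.
congr (_ * _); rewrite -{1}(add0n (K * M)) big_addn addKn.
by apply: eq_bigr => i _; rewrite G_perM.
Qed.

Lemma leq_of_surj m n (g : nat -> nat) :
  (forall t, t < n -> exists2 j, j < m & g j = t) -> n <= m.
Proof.
move=> g_onto; rewrite -(size_iota 0 n) -(size_iota 0 m) -(size_map g (iota 0 m)).
apply: uniq_leq_size (iota_uniq 0 n) _ => t; rewrite mem_iota => /g_onto [j jm <-].
by rewrite map_f // mem_iota.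
Qed.

Lemma leq_of_inj m n (g : nat -> nat) :
  (forall i j, i < m -> j < m -> g i = g j -> i = j) -> (forall i, i < m -> g i < n) ->
  m <= n.
Proof.
move=> g_inj g_lt; rewrite -(size_iota 0 n) -(size_iota 0 m) -(size_map g (iota 0 m)).
apply: uniq_leq_size => [|x /mapP [j j_in ->]].
  by rewrite map_inj_in_uniq ?iota_uniq // => i j; rewrite !mem_iota /= !add0n; apply: g_inj.
by move: j_in; rewrite !mem_iota /= !add0n => /g_lt.
Qed.

Section PolynomialOrbit.
Variables (p : nat) (c : seq (nat -> nat)) (x0 : nat -> nat).
Local Notation f := (peval p c).
Hypotheses (p_prime : prime p) (c_Zp : Zp_poly p c).
Hypothesis orbit_Zp : forall j, Zp p (iter j f x0).
Hypothesis x0_rec : forall n, exists m, iter m.+1 f x0 n = x0 n.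
Local Notation L := (period x0_rec).
Local Notation f_lw := (peval_levelwise p c).

(* Congruent to (f^(L n))'(x0) modulo p, by the chain rule. *)
Definition cycle_multiplier n := \prod_(0 <= i < L n) pderiv1 c (iter i f x0 1).
Local Notation A := cycle_multiplier.

Lemma cycle_multiplierE n M : L n = L 1 * M -> A n = A 1 ^ M.
Proof.
move=> LM; rewrite /cycle_multiplier LM prodn_periodic // => i.
by rewrite (iter_addn_period f_lw).
Qed.

Lemma x0_small n : x0 n %% p ^ n = x0 n.
Proof. by rewrite modn_small // (Zp_lt _ (orbit_Zp 0)). Qed.

Section Lift.
Variables (n b : nat).
Hypothesis n_gt0 : 0 < n.
Hypothesis x0_digit : iter (L n) f x0 n.+1 = x0 n.+1 + p ^ n * b %[mod p ^ n.+1].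

Lemma iter_period_lift j : iter (j * L n) f x0 n.+1
  = x0 n.+1 + p ^ n * (b * \sum_(0 <= i < j) A n ^ i) %[mod p ^ n.+1].
Proof.
elim: j => [|j IH]; first by rewrite big_geq // mul0n !muln0 addn0.
rewrite mulSn iterD (iter_peval_taylor c_Zp _ n_gt0 orbit_Zp IH) -/(A n).
rewrite -modnDml x0_digit modnDml; congr (_ %% _).
have -> : \sum_(0 <= i < j.+1) A n ^ i = 1 + A n * \sum_(0 <= i < j) A n ^ i.
  by rewrite big_nat_recl // big_distrr; congr (_ + _); apply: eq_bigr => i _; rewrite expnS.
ring.
Qed.

Lemma dvdn_period_succ j :
  (L n.+1 %| j * L n) = (p %| b * \sum_(0 <= i < j) A n ^ i).
Proof.
rewrite (period_dvdn f_lw) -[X in _ == X]x0_small.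
rewrite -(modn_small (Zp_lt _ (orbit_Zp _))) iter_period_lift.
rewrite -[X in _ == X %% _]addn0 eqn_modDl mod0n expnSr -muln_modr muln_eq0.
by rewrite expn_eq0 eqn0Ngt prime_gt0.
Qed.

Lemma dvdn_period_ratio j :
  (L n.+1 %/ L n %| j) = (p %| b * \sum_(0 <= i < j) A n ^ i).
Proof.
rewrite -dvdn_period_succ -[in RHS](divnK (period_dvd_le f_lw x0_rec orbit_Zp (leqnSn n))).
by rewrite dvdn_pmul2r ?period_gt0.
Qed.

Lemma period_ratio_onto :
  (forall t, t < p -> exists J, iter J f x0 n.+1 = (x0 n.+1 + p ^ n * t) %% p ^ n.+1) ->
  p <= L n.+1 %/ L n.
Proof.
move=> onto; set q := L n.+1 %/ L n.
have Lq : L n.+1 = q * L n by rewrite divnK // (period_dvd_le f_lw x0_rec orbit_Zp).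
have q_gt0 : 0 < q by move: (period_gt0 x0_rec n.+1); rewrite Lq muln_gt0 => /andP[].
apply: (@leq_of_surj _ _ (fun j => (b * \sum_(0 <= i < j) A n ^ i) %% p)) => t t_lt.
have [J xJ] := onto t t_lt.
have /dvdnP [J' J_eq] : L n %| J.
  rewrite (period_dvdn f_lw); apply/eqP.
  rewrite -(Zp_mod (orbit_Zp J) (leqnSn n)) xJ modn_dvdm ?dvdn_exp2l //.
  by rewrite addnC mulnC modnMDl (Zp_mod (orbit_Zp 0) (leqnSn n)).
rewrite {}J_eq in xJ; exists (J' %% q); first by rewrite ltn_pmod.
have xJ' : iter (J' %% q * L n) f x0 n.+1 = iter (J' * L n) f x0 n.+1.
  by apply/eqP; rewrite (eq_iter_period f_lw) Lq muln_modl modn_mod.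
move: (iter_period_lift (J' %% q)); rewrite xJ' xJ modn_mod => /eqP.
rewrite eqn_modDl expnSr -!muln_modr => /eqP /eqP.
by rewrite eqn_pmul2l ?expn_gt0 ?prime_gt0 // (modn_small t_lt) => /eqP.
Qed.

End Lift.

Lemma period_succ n : 0 < n -> exists2 q, L n.+1 = L n * q &
  [\/ q = 1, q = p | [/\ q %| p.-1, A n ^ q = 1 %[mod p] & A n != 1 %[mod p]]].
Proof.
move=> n_gt0; have [b x0_digit] :=
  Zp_digit (prime_gt0 p_prime) (orbit_Zp (L n)) (orbit_Zp 0) (iter_period x0_rec n).
have ratio := dvdn_period_ratio n_gt0 x0_digit; set q := L n.+1 %/ L n in ratio *.
have Lq : L n.+1 = L n * q by rewrite mulnC divnK // (period_dvd_le f_lw x0_rec orbit_Zp).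
have q_gt0 : 0 < q by move: (period_gt0 x0_rec n.+1); rewrite Lq muln_gt0 => /andP[].
exists q => //; apply: (affine_return_time (b := b) p_prime q_gt0); first by rewrite -ratio.
by move=> j /andP [j_gt0 j_lt]; rewrite -ratio; apply/negP => /(dvdn_leq j_gt0); lia.
Qed.

Lemma period_succ_full n : 0 < n ->
  (forall t, t < p -> exists J, iter J f x0 n.+1 = (x0 n.+1 + p ^ n * t) %% p ^ n.+1) ->
  L n.+1 = L n * p.
Proof.
move=> n_gt0 onto; have [q Lq q_cases] := period_succ n_gt0.
have [b x0_digit] :=
  Zp_digit (prime_gt0 p_prime) (orbit_Zp (L n)) (orbit_Zp 0) (iter_period x0_rec n).
have := period_ratio_onto n_gt0 x0_digit onto; rewrite Lq mulKn ?period_gt0 // => p_le.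
have p_gt1 := prime_gt1 p_prime.
case: q_cases {Lq} => [q1|->//|[/dvdn_leq q_dvd _ _]]; first by lia.
by move: q_dvd; lia.
Qed.

Lemma period1_le : L 1 <= p.
Proof.
rewrite -[X in _ <= X]expn1; apply: (@leq_of_inj _ _ (fun j => iter j f x0 1)).
  move=> i j i_lt j_lt /eqP; rewrite (eq_iter_period f_lw) !modn_small //.
  by move/eqP.
by move=> i _; apply: Zp_lt (orbit_Zp i).
Qed.

(* The part of L n prime to p can grow only once: after it does, A n = 1 mod p. *)
Lemma period_shape n : 0 < n -> exists d e, L n = L 1 * (d * p ^ e) /\ d %| p.-1.
Proof.
have shape k : 0 < k -> exists d e,
    [/\ L k = L 1 * (d * p ^ e), d %| p.-1 & d = 1 \/ A 1 ^ (d * p ^ e) = 1 %[mod p]].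
  elim: k => // k IH _; case: (posnP k) => [-> | k_gt0].
    by exists 1, 0; rewrite muln1; split => //; left.
  have [d [e [Lk d_dvd d_cases]]] := IH k_gt0.
  have Ak : A k = A 1 ^ (d * p ^ e) by apply: cycle_multiplierE.
  have [q Lq [q1 | qp | [q_dvd Aq AkN1]]] := period_succ k_gt0.
  - by exists d, e; rewrite Lq q1 muln1.
  - exists d, e.+1; split => //; first by rewrite Lq qp Lk expnSr !mulnA.
    case: d_cases => [->|A1]; [by left | right].
    by rewrite expnSr mulnA expnM -modnXm A1 modnXm exp1n.
  - have d1 : d = 1 by case: d_cases => // A1; rewrite Ak A1 eqxx in AkN1.
    subst d; exists q, e; split => //; first by rewrite Lq Lk; ring.
    by right; rewrite mulnC expnM -(mul1n (p ^ e)) -Ak.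
by move=> /shape [d [e [? ? _]]]; exists d, e.
Qed.

Variable E : (nat -> nat) -> Prop.
Hypotheses (E_open : open_in (fun n => p ^ n) E) (Ex0 : E x0) (f_min : minimal_on p E f).

Lemma period_succ_eventually : exists N, forall n, N < n -> L n.+1 = L n * p.
Proof.
have [N N_ball] := E_open Ex0.
exists N => n N_lt; apply: period_succ_full => [|t _]; first lia.
have [z [z_Zp zn zSn]] := Zp_lift n t (prime_gt0 p_prime) (orbit_Zp 0).
have Ez : E z by apply: N_ball => //; apply: Zp_eq_le z_Zp (orbit_Zp 0) (ltnW N_lt) zn.
by have [J xJ] := f_min Ex0 Ez n.+1; exists J; rewrite xJ zSn.
Qed.

Lemma period_tail : exists k d e N, [/\ 1 <= k <= p, d %| p.-1 &
  forall s, L (N + s) = k * d * p ^ (e + s)].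
Proof.
have [N grow] := period_succ_eventually.
have [d [e [LN d_dvd]]] := period_shape (ltn0Sn N).
exists (L 1), d, e, N.+1; split => //; first by rewrite (period_gt0 x0_rec 1) period1_le.
elim=> [|s IH]; first by rewrite !addn0 LN mulnA.
by rewrite addnS grow ?IH ?addnS ?expnS; [ring | lia].
Qed.

End PolynomialOrbit.

Section OdometerConjugacy.
Variables (p : nat) (F : (nat -> nat) -> nat -> nat) (E : (nat -> nat) -> Prop).
Variable x0 : nat -> nat.
Hypotheses (F_lw : levelwise F) (E_Zp : forall x, E x -> Zp p x).
Hypotheses (E_inv : forall x, E x -> E (F x)) (Ex0 : E x0) (F_min : minimal_on p E F).
Hypothesis E_closed : open_in (fun n => p ^ n) (fun x => Zp p x /\ ~ E x).
Hypothesis x0_rec : forall n, exists m, iter m.+1 F x0 n = x0 n.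
Local Notation L := (period x0_rec).
Local Notation index := (orbit_index x0_rec).
Variables (P : nat -> nat) (N e : nat).
Hypothesis P_dvdS : forall s, P s %| P s.+1.
Hypothesis P_dvd : forall s, P s %| L (N + s).
Hypothesis L_dvd : forall n, L n %| P (e + n).

Local Notation orbit_Zp j := (E_Zp (iter_stable j E_inv Ex0)).

Lemma P_gt0 s : 0 < P s.
Proof.
have := period_gt0 x0_rec (N + s); move: (P_dvd s).
by case: (posnP (P s)) => // ->; rewrite dvd0n => /eqP ->.
Qed.

Lemma orbit_index_mod_le x n m : E x -> n <= m -> index m x = index n x %[mod L n].
Proof.
move=> Ex nm; have [j xj] := F_min Ex0 Ex m.
apply: (orbit_index_mod F_lw).
exact: Zp_eq_le (orbit_Zp _) (E_Zp Ex) nm (orbit_indexP F_lw x0_rec xj).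
Qed.

Definition to_odometer x s := index (N + s) x %% P s.

Definition from_odometer y n := iter (y (e + n)) F x0 n.

Lemma to_odometer_odo x : E x -> odometer P (to_odometer x).
Proof.
move=> Ex s; split; first by rewrite ltn_pmod ?P_gt0.
rewrite /to_odometer modn_dvdm //; apply: eqmod_dvd (P_dvd s) _.
by rewrite addnS; apply: orbit_index_mod_le.
Qed.

Lemma from_odometer_Zp y : odometer P y -> Zp p (from_odometer y).
Proof.
move=> y_odo n; split; first exact: Zp_lt (orbit_Zp _).
rewrite /from_odometer (Zp_mod (orbit_Zp _) (leqnSn n)); apply/eqP.
by rewrite (eq_iter_period F_lw) addnS -(modn_dvdm (y _) (L_dvd n)) (proj2 (y_odo _)).
Qed.

Lemma from_odometer_E y : odometer P y -> E (from_odometer y).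
Proof.
move=> y_odo; apply: NNPP => gyNE.
have [n n_ball] := E_closed (conj (from_odometer_Zp y_odo) gyNE).
by have [_ []] := n_ball _ (orbit_Zp (y (e + n))) erefl; apply: iter_stable.
Qed.

Lemma from_to_odometer x : E x -> from_odometer (to_odometer x) =1 x.
Proof.
move=> Ex n; have [j xj] := F_min Ex0 Ex (N + (e + n)).
have n_le : n <= N + (e + n) by lia.
have := orbit_indexP F_lw x0_rec xj; move/(Zp_eq_le (orbit_Zp _) (E_Zp Ex) n_le) => <-.
by apply/eqP; rewrite (eq_iter_period F_lw) modn_dvdm.
Qed.

Lemma to_from_odometer y : odometer P y -> to_odometer (from_odometer y) =1 y.
Proof.
move=> y_odo s.
have gy : iter (y (e + (N + s))) F x0 (N + s) = from_odometer y (N + s) by [].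
rewrite /to_odometer -(eqmod_dvd (P_dvd s) (orbit_index_mod F_lw x0_rec gy)).
by apply: invlim_mod P_dvdS y_odo _; lia.
Qed.

Lemma to_odometer_comm x : E x -> to_odometer (F x) =1 adding_machine P (to_odometer x).
Proof.
move=> Ex s; rewrite /adding_machine /to_odometer modnDml.
have [j xj] := F_min Ex0 Ex (N + s).
have Fx : iter (index (N + s) x + 1) F x0 (N + s) = F x (N + s).
  by rewrite addn1 iterS; apply: F_lw; exact (orbit_indexP F_lw x0_rec xj).
exact/esym/(eqmod_dvd (P_dvd s))/(orbit_index_mod F_lw x0_rec Fx).
Qed.

Theorem conj_to_odometer_of_periods : conj_to_odometer p E F P.
Proof.
exists to_odometer, from_odometer.
split; first exact: to_odometer_odo.
split; first exact: from_odometer_E.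
split; first exact: from_to_odometer.
split; first exact: to_from_odometer.
split; first by move=> x _ s; exists (N + s) => z _ zx; rewrite /to_odometer /orbit_index zx.
split; first by move=> y _ n; exists (e + n) => z _ zy; rewrite /from_odometer zy.
exact: to_odometer_comm.
Qed.

End OdometerConjugacy.

Lemma odo_seq_dvdS p k d s : odo_seq p k d s %| odo_seq p k d s.+1.
Proof.
case: s => [|s] /=; first by rewrite -mulnA dvdn_mulr.
by rewrite dvdn_mul // dvdn_exp2l.
Qed.

Lemma odo_seq_cofinal p k d e N (L : nat -> nat) :
  (forall n m, n <= m -> L n %| L m) -> (forall s, L (N + s) = k * d * p ^ (e + s)) ->
  (forall s, odo_seq p k d s %| L (N + s)) /\ (forall n, L n %| odo_seq p k d (e.+1 + n)).
Proof.
move=> L_mono L_tail; split=> [[|s]|n]; rewrite ?L_tail /=.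
- by rewrite -mulnA dvdn_mulr.
- by rewrite dvdn_mul // dvdn_exp2l //; lia.
- by rewrite -L_tail L_mono // leq_addl.
Qed.

Theorem theoremC (p : nat) (c : seq (nat -> nat)) (E : (nat -> nat) -> Prop) :
  prime p ->
  Zp_poly p c -> deg_ge2 c ->
  clopen_in (fun n => p ^ n) E ->
  (exists x, E x) ->
  (forall x, E x -> E (peval p c x)) ->
  minimal_on p E (peval p c) ->
  exists k d : nat,
    [/\ 1 <= k <= p, d %| p.-1 & conj_to_odometer p E (peval p c) (odo_seq p k d)].
Proof.
move=> p_prime c_Zp _ [E_Zp [E_open E_closed]] [x0 Ex0] E_inv f_min.
have f_lw := peval_levelwise p c.
have orbit_Zp j := E_Zp _ (iter_stable j E_inv Ex0).
have x0_rec n : exists m, iter m.+1 (peval p c) x0 n = x0 n.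
  by have [m xm] := f_min _ _ (E_inv _ Ex0) Ex0 n; exists m; rewrite iterSr.
have [k [d [e [N [k_bounds d_dvd L_tail]]]]] :=
  period_tail p_prime c_Zp orbit_Zp x0_rec E_open Ex0 f_min.
have [P_dvd L_dvd] := odo_seq_cofinal (period_dvd_le f_lw x0_rec orbit_Zp) L_tail.
exists k, d; split => //.
exact (conj_to_odometer_of_periods f_lw E_Zp E_inv Ex0 f_min E_closed
  (odo_seq_dvdS p k d) P_dvd L_dvd).
Qed.
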